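(* Let $p,q,r\ge1$ and $E$ be positive integers, $A\in[-E,E]^{p\times q}$ and $B\in[-E,E]^{q\times r}$ integer matrices, and set $A_{p,j}:=0$ for all $j$. Let the alphabet consist of pairwise distinct characters $x_0,\dots,x_{p-1},x_p^{(0)},\dots,x_p^{(r-1)},x_{p+1},\dots,x_{2p},y_0,\dots,y_{2p+q-1}$. For $\ell\in[0,r)$ let $X_\ell:=x_0\cdots x_{p-1}x_p^{(\ell)}x_{p+1}\cdots x_{2p}$ (length $2p+1$) and $Y:=y_0\cdots y_{2p+q-1}$. Let $D,F$ be positive integers with $E\ll D\ll F$, where $a\ll b$ means $a(|X_\ell|+|Y|)<b$. Define the weight function $w$ by: $w(\sigma,\varepsilon)=w(\varepsilon,\sigma)=F$ for every character $\sigma$; $w(x_i,y_{i+j})=F+A_{i,j}-A_{i+1,j}+(q-j)D$ for $i\in[0,p)$, $j\in[0,q)$; $w(x_p^{(\ell)},y_{p+j})=F+B_{j,\ell}$ for $j\in[0,q)$; $w(x_{p+i},y_{p+i+j})=F+(j+1)D$ for $i\in[1,p]$, $j\in[0,q)$; $w(\sigma,\sigma)=0$; and $w(\sigma,\rho)=2F$ for all other pairs. Then for every $\ell\in[0,r)$ and every $i\in[0,p)$, $$\mathrm{ed}^w\big(X_\ell[i\,.\,.\,|X_\ell|-i),Y\big)=|Y|\,F+(p-i)(q+1)D+\min_j\{A_{i,j}+B_{j,\ell}\},$$ and an optimal alignment deletes no characters of $X_\ell$.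
   Context: $X[a\,.\,.\,b)$ denotes the fragment $X[a]\cdots X[b-1]$. $\mathrm{ed}^w(X,Y)$ is the minimum total cost of an alignment of $X$ onto $Y$, i.e., of a monotone lattice path from $(0,0)$ to $(|X|,|Y|)$ with steps $(1,0)$ from $(x,y)$ (deleting $X[x]$, cost $w(X[x],\varepsilon)$), $(0,1)$ (inserting $Y[y]$, cost $w(\varepsilon,Y[y])$), and $(1,1)$ (aligning $X[x]$ to $Y[y]$, cost $w(X[x],Y[y])$). *)

From mathcomp Require Import all_boot all_order all_algebra.
Set Implicit Arguments. Unset Strict Implicit. Unset Printing Implicit Defensive.
Import Order.TTheory GRing.Theory Num.Theory.
Local Open Scope ring_scope.

(* a weight function on (char or epsilon) pairs; None = epsilon *)
Definition weight (C : Type) := option C -> option C -> int.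

(* one step of a monotone lattice path from (0,0) to (|X|,|Y|) *)
Inductive step := Del | Ins | Sub.   (* (1,0), (0,1), (1,1) *)

Definition isDel (s : step) : bool := if s is Del then true else false.

(* cost of an alignment (lattice path) of X onto Y; None if the step sequence
   is not a path from (0,0) to (|X|,|Y|) *)
Fixpoint acost (C : Type) (w : weight C) (X Y : seq C) (s : seq step)
  : option int :=
  match s, X, Y with
  | [::], [::], [::] => Some 0
  | Del :: s', x :: X', _ =>
      if acost w X' Y s' is Some c then Some (w (Some x) None + c) else None
  | Ins :: s', _, y :: Y' =>
      if acost w X Y' s' is Some c then Some (w None (Some y) + c) else None
  | Sub :: s', x :: X', y :: Y' =>
      if acost w X' Y' s' is Some c then Some (w (Some x) (Some y) + c) else None
  | _, _, _ => None
  end.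

Definition optimal_alignment (C : Type) (w : weight C) (X Y : seq C)
  (s : seq step) : Prop :=
  exists c, acost w X Y s = Some c /\
    forall s' c', acost w X Y s' = Some c' -> c <= c'.

Definition is_edw (C : Type) (w : weight C) (X Y : seq C) (d : int) : Prop :=
  (exists s, acost w X Y s = Some d) /\
  (forall s c, acost w X Y s = Some c -> d <= c).

Definition frag (C : Type) (X : seq C) (a b : nat) : seq C :=
  take (b - a) (drop a X).

(* alphabet: CX i = x_i (i <> p used), CXp l = x_p^(l), CY k = y_k;
   distinct constructors / indices give pairwise distinct characters *)
Inductive chr := CX of nat | CXp of nat | CY of nat.

(* entry of an integer matrix at nat indices, 0 outside the range
   (this realises the convention A_{p,j} := 0) *)
Definition mxget (m n : nat) (A : 'M[int]_(m, n)) (i j : nat) : int :=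
  match @insub nat (fun k => k < m)%N _ i, @insub nat (fun k => k < n)%N _ j with
  | Some i', Some j' => A i' j'
  | _, _ => 0
  end.

Definition Xs (p l : nat) : seq chr :=
  [seq CX k | k <- iota 0 p] ++ [:: CXp l] ++ [seq CX k | k <- iota p.+1 p].

Definition Ys (p q : nat) : seq chr := [seq CY k | k <- iota 0 (2 * p + q)].

Definition wchr (p q : nat) (A : 'M[int]_(p, q)) (r : nat)
  (B : 'M[int]_(q, r)) (D F : int) : weight chr :=
  fun a b =>
  match a, b with
  | None, None => 0
  | Some _, None => F
  | None, Some _ => F
  | Some (CX i), Some (CY k) =>
      if (i < p)%N && (i <= k)%N && (k < i + q)%N then
        let j := (k - i)%N in
        F + mxget A i j - mxget A i.+1 j + (q - j)%:R * D
      else if (p.+1 <= i)%N && (i <= 2 * p)%N && (i <= k)%N && (k < i + q)%N then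
        let j := (k - i)%N in F + (j.+1)%:R * D
      else 2 * F
  | Some (CXp l), Some (CY k) =>
      if (p <= k)%N && (k < p + q)%N then F + mxget B (k - p) l else 2 * F
  | Some (CX i), Some (CX i') => if i == i' then 0 else 2 * F
  | Some (CXp l), Some (CXp l') => if l == l' then 0 else 2 * F
  | Some (CY k), Some (CY k') => if k == k' then 0 else 2 * F
  | Some _, Some _ => 2 * F
  end.

Definition minAB (p q r : nat) (A : 'M[int]_(p, q)) (B : 'M[int]_(q, r))
  (i l : nat) : int :=
  \big[Order.min/(mxget A i 0 + mxget B 0 l)]_(j < q)
     (mxget A i j + mxget B j l).

From Pilot Require Import Defs.
From mathcomp Require Import all_boot all_order all_algebra zify ring.
Import Order.TTheory GRing.Theory Num.Theory.
Local Open Scope ring_scope.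

(* Lower bound by a potential on the alignment grid, i.e. a feasible dual
   solution of the shortest-path problem: L(a, b) vanishes at (|X|, |Y|) and
   decreases by at most the cost of every deletion, insertion and substitution
   step, so every alignment costs at least L(0, 0).  With x_t the a-th
   character of X, L(a, b) is (|Y| - b) F plus what substituting the rest of X
   along the diagonal of the band nearest to (t, b) costs beyond F per
   character: multiples of D and the telescoping A- and B-entries.
   E << D << F makes every step respect L, with equality for insertions on the
   first and last rows and for substitutions inside the band, so inserting
   y_0 .. y_(i+j-1) for a j minimising A_(i,j) + B_(j,l), substituting X
   diagonally and inserting the rest of Y costs exactly L(0, 0). *)

Section AlignmentPotential.
Context {C : Type} {w : weight C} {X Y : seq C} (x0 : C) (L : nat -> nat -> int).

Lemma acost_ge_potential :
  (forall a b, (a < size X)%N -> (b <= size Y)%N ->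
     L a b <= w (Some (nth x0 X a)) None + L a.+1 b) ->
  (forall a b, (a <= size X)%N -> (b < size Y)%N ->
     L a b <= w None (Some (nth x0 Y b)) + L a b.+1) ->
  (forall a b, (a < size X)%N -> (b < size Y)%N ->
     L a b <= w (Some (nth x0 X a)) (Some (nth x0 Y b)) + L a.+1 b.+1) ->
  L (size X) (size Y) <= 0 ->
  forall s a b c, (a <= size X)%N -> (b <= size Y)%N ->
    acost w (drop a X) (drop b Y) s = Some c -> L a b <= c.
Proof.
move=> Ldel Lins Lsub Lend; elim=> [|st s IH] a b c ha hb.
  case hX: (drop a X) => [|x X']; case hY: (drop b Y) => [|y Y'] //= [<-].
  move: (congr1 size hX) (congr1 size hY); rewrite !size_drop /= => haX hbY.
  by have [-> ->] : a = size X /\ b = size Y by split; lia.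
case: st.
- case: (ltnP a (size X)) => [haX|]; last by move/drop_oversize->; case: (drop b Y).
  rewrite (drop_nth x0 haX) /=.
  case e: acost => [c'|] // [<-].
  by apply: le_trans (Ldel _ _ haX hb) _; rewrite lerD2l (IH _ _ _ haX hb e).
- case: (ltnP b (size Y)) => [hbY|]; last by move/drop_oversize->; case: (drop a X).
  rewrite (drop_nth x0 hbY).
  have ins_le c' : acost w (drop a X) (drop b.+1 Y) s = Some c' ->
      L a b <= w None (Some (nth x0 Y b)) + c'.
    by move=> e; apply: le_trans (Lins _ _ ha hbY) _; rewrite lerD2l (IH _ _ _ ha hbY e).
  case: (drop a X) ins_le => [|x X'] ins_le /=;
    by case e: (acost w _ (drop b.+1 Y) s) => [c'|] // [<-]; exact: ins_le.
- case: (ltnP a (size X)) => [haX|]; last by move/drop_oversize->; case: (drop b Y).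
  case: (ltnP b (size Y)) => [hbY|]; last by move/drop_oversize->; rewrite (drop_nth x0 haX).
  rewrite (drop_nth x0 haX) (drop_nth x0 hbY) /=.
  case e: acost => [c'|] // [<-].
  by apply: le_trans (Lsub _ _ haX hbY) _; rewrite lerD2l (IH _ _ _ haX hbY e).
Qed.

Lemma edw_of_lower_bound s d :
  acost w X Y s = Some d -> (forall s' c, acost w X Y s' = Some c -> d <= c) ->
  is_edw w X Y d /\ optimal_alignment w X Y s.
Proof. by move=> hs lb; split; [split; [exists s|] | exists d]. Qed.

Lemma acost_nseq_Ins a b m s :
  (b + m <= size Y)%N ->
  (forall k, (b <= k < b + m)%N -> L a k = w None (Some (nth x0 Y k)) + L a k.+1) ->
  acost w (drop a X) (drop (b + m) Y) s = Some (L a (b + m)) ->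
  acost w (drop a X) (drop b Y) (nseq m Ins ++ s) = Some (L a b).
Proof.
elim: m b => [|m IH] b hbm tight; first by rewrite addn0.
move=> e; have hb : (b < size Y)%N by lia.
rewrite /= (drop_nth x0 hb) (IH b.+1).
- by rewrite (tight b) //; lia.
- lia.
- by move=> k hk; apply: tight; lia.
- by rewrite addSnnS.
Qed.

Lemma acost_nseq_Sub a b m s :
  (a + m <= size X)%N -> (b + m <= size Y)%N ->
  (forall u, (u < m)%N -> L (a + u) (b + u) =
     w (Some (nth x0 X (a + u))) (Some (nth x0 Y (b + u))) + L (a + u).+1 (b + u).+1) ->
  acost w (drop (a + m) X) (drop (b + m) Y) s = Some (L (a + m) (b + m)) ->
  acost w (drop a X) (drop b Y) (nseq m Defs.Sub ++ s) = Some (L a b).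
Proof.
elim: m a b => [|m IH] a b ham hbm tight; first by rewrite !addn0.
move=> e.
have ha : (a < size X)%N by lia.
have hb : (b < size Y)%N by lia.
rewrite /= (drop_nth x0 ha) (drop_nth x0 hb) (IH a.+1 b.+1).
- by have := tight 0%N isT; rewrite !addn0 => ->.
- lia.
- lia.
- by move=> u hu; have := tight u.+1 hu; rewrite !addnS !addSn.
- by rewrite !addSnnS.
Qed.

End AlignmentPotential.

Lemma size_frag (C : Type) (X : seq C) a b :
  (b <= size X)%N -> size (frag X a b) = (b - a)%N.
Proof. by move=> hb; rewrite /frag size_take size_drop; case: ltnP; lia. Qed.

Lemma nth_frag (C : Type) (x0 : C) (X : seq C) a b k :
  (k < b - a)%N -> nth x0 (frag X a b) k = nth x0 X (a + k).
Proof. by move=> hk; rewrite /frag nth_take // nth_drop. Qed.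

Definition xchr (p l t : nat) : chr := if t == p then CXp l else CX t.

Lemma size_Xs p l : size (Xs p l) = (2 * p + 1)%N.
Proof. by rewrite /Xs size_cat /= !size_map !size_iota addnS addn1 mul2n addnn. Qed.

Lemma size_Ys p q : size (Ys p q) = (2 * p + q)%N.
Proof. by rewrite /Ys size_map size_iota. Qed.

Lemma nth_Xs p l t : (t < 2 * p + 1)%N -> nth (CX 0) (Xs p l) t = xchr p l t.
Proof.
move=> ht; rewrite /Xs nth_cat size_map size_iota /xchr.
case: ltnP => htp.
  by rewrite (nth_map 0%N) ?size_iota // nth_iota // ifN // ltn_eqF.
case: (eqVneq t p) => [->|ne]; first by rewrite subnn.
have -> : (t - p = (t - p.+1).+1)%N by lia.
by rewrite /= (nth_map 0%N) ?size_iota ?nth_iota; [congr CX|..]; lia.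
Qed.

Lemma nth_Ys p q k : (k < 2 * p + q)%N -> nth (CX 0) (Ys p q) k = CY k.
Proof. by move=> hk; rewrite /Ys (nth_map 0%N) ?size_iota // nth_iota. Qed.

Lemma mxget_out m n (M : 'M[int]_(m, n)) t c : (m <= t)%N -> mxget M t c = 0.
Proof. by move=> h; rewrite /mxget insubN // -leqNgt. Qed.

Lemma mxget_bound m n (M : 'M[int]_(m, n)) (E : int) t c :
  0 <= E -> (forall i j, - E <= M i j <= E) -> - E <= mxget M t c <= E.
Proof.
move=> hE hM; rewrite /mxget.
case: (insub t : option 'I_m) => [t'|]; case: (insub c : option 'I_n) => [c'|] //;
  by rewrite oppr_le0 hE.
Qed.

Lemma wchr_off_band p q r (A : 'M[int]_(p, q)) (B : 'M[int]_(q, r)) l D F t k :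
  ~~ (t <= k < t + q)%N -> wchr A B D F (Some (xchr p l t)) (Some (CY k)) = 2 * F.
Proof.
move=> /negbTE band; rewrite /xchr; case: (eqVneq t p) => [tp|_] /=; first by rewrite -tp band.
by rewrite -!andbA band !andbF.
Qed.

Lemma wchr_del p q r (A : 'M[int]_(p, q)) (B : 'M[int]_(q, r)) D F x :
  wchr A B D F (Some x) None = F.
Proof. by case: x. Qed.

Lemma wchr_ins p q r (A : 'M[int]_(p, q)) (B : 'M[int]_(q, r)) D F y :
  wchr A B D F None (Some y) = F.
Proof. by case: y. Qed.

(* The diagonal of the band [t <= k < t + q] nearest to the cell (t, k). *)
Definition offset (q t k : nat) : nat := minn (k - t) q.-1.

Lemma offset_lt q t k : (0 < q)%N -> (offset q t k < q)%N.
Proof. by rewrite /offset; lia. Qed.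

Lemma offset_band q t c : (c < q)%N -> offset q t (t + c) = c.
Proof. by rewrite /offset; lia. Qed.

Section Potential.
Context {p q r : nat} {A : 'M[int]_(p, q)} {B : 'M[int]_(q, r)} {l i D F : nat} {E : int}.
Hypotheses (q_gt0 : (0 < q)%N) (i_lt_p : (i < p)%N).
Hypotheses (A_bound : forall t c, - E <= mxget A t c <= E)
           (B_bound : forall c, - E <= mxget B c l <= E).
Hypotheses (E_ll_D : 4 * E < D%:Z)
           (D_ll_F : (q + 2 * p + 1)%:R * D%:Z + 4 * E < F%:Z).

Local Notation w := (wchr A B D%:Z F%:Z).

(* Multiple of D paid from row t on when x_t, x_(t+1), ... are substituted
   with y_(t+c), y_(t+1+c), ... up to the end of X. *)
Definition diag_cost (t c : nat) : nat :=
  if (t <= p)%N then ((p - t) * (q - c) + (p - i) * c.+1)%N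
  else ((2 * p + 1 - i - t) * c.+1)%N.

Lemma diag_cost_row_drop t c c' :
  (c < q)%N -> (c' <= c <= c'.+1)%N -> (i <= t < 2 * p + 1 - i)%N ->
  (diag_cost t c <= q + 2 * p + 1 + diag_cost t.+1 c')%N.
Proof. rewrite /diag_cost; case: ifP; case: ifP; nia. Qed.

Lemma diag_cost_ltS t c :
  (c < q)%N -> (i < t <= p)%N -> (diag_cost t c < diag_cost t c.+1)%N.
Proof.
move=> hc /andP[hit htp]; rewrite /diag_cost htp.
have -> : (q - c = (q - c.+1).+1)%N by lia.
have : (p - t < p - i)%N by lia.
by move: (p - t)%N (p - i)%N (q - c.+1)%N => a b e hab; rewrite !mulnS; lia.
Qed.

Lemma diag_cost_step_lt t c : (t < p)%N -> diag_cost t c = (q - c + diag_cost t.+1 c)%N.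
Proof. by rewrite /diag_cost; case: ifP; case: ifP; nia. Qed.

Lemma diag_cost_step_eq c : diag_cost p c = diag_cost p.+1 c.
Proof. by rewrite /diag_cost; case: ifP; case: ifP; nia. Qed.

Lemma diag_cost_step_gt t c :
  (p < t < 2 * p + 1 - i)%N -> diag_cost t c = (c.+1 + diag_cost t.+1 c)%N.
Proof. by rewrite /diag_cost; case: ifP; case: ifP; nia. Qed.

Lemma diag_cost_leS t c : (p < t)%N -> (diag_cost t c <= diag_cost t c.+1)%N.
Proof. by rewrite /diag_cost; case: ifP; nia. Qed.

Lemma diag_cost_first c : (c < q)%N -> diag_cost i c = ((p - i) * (q + 1))%N.
Proof. by move=> hc; rewrite /diag_cost ltnW //; nia. Qed.

Lemma diag_cost_last c : diag_cost (2 * p + 1 - i) c = 0%N.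
Proof. by rewrite /diag_cost ifN ?subnn //; lia. Qed.

Definition diag_potential (t c : nat) : int :=
  (diag_cost t c)%:R * D%:Z
  + (if (t <= p)%N then mxget A t c + mxget B c l else 0).

Definition target : int := ((p - i) * (q + 1))%:R * D%:Z + minAB A B i l.

(* On the first row the leading insertions still let an alignment choose its
   diagonal, hence the minimum over all of them. *)
Definition potential (t k : nat) : int :=
  if t == i then target else diag_potential t (offset q t k).

Lemma target_le_diag_potential c : (c < q)%N -> target <= diag_potential i c.
Proof.
move=> hc; rewrite /diag_potential (ltnW i_lt_p) diag_cost_first // lerD2l.
exact: (bigmin_le _ (Ordinal hc) (fun j : 'I_q => _ + _)).
Qed.

Lemma target_attained : exists2 j, (j < q)%N & target = diag_potential i j.
Proof.
suff [j hj minE] : exists2 j, (j < q)%N & minAB A B i l = mxget A i j + mxget B j l.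
  exists j => //.
  by rewrite /target minE /diag_potential (ltnW i_lt_p) diag_cost_first ?addrA.
apply: (big_ind (fun v => exists2 j, (j < q)%N & v = mxget A i j + mxget B j l)).
- by exists 0%N.
- by move=> x y [j1 h1 ->] [j2 h2 ->]; rewrite /Order.min; case: ifP; [exists j1|exists j2].
- by move=> j _; exists (nat_of_ord j).
Qed.

Lemma diag_potential_del t c c' :
  (c < q)%N -> (c' <= c <= c'.+1)%N -> (i <= t < 2 * p + 1 - i)%N ->
  diag_potential t c <= F%:Z + diag_potential t.+1 c'.
Proof.
move=> hc hcc ht; have := diag_cost_row_drop t c c' hc hcc ht.
have := A_bound t c; have := A_bound t.+1 c'; have := B_bound c; have := B_bound c'.
by rewrite /diag_potential; case: ifP; case: ifP; nia.
Qed.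

Lemma diag_potential_offsetS t c :
  (c.+1 < q)%N -> (i < t)%N -> diag_potential t c <= diag_potential t c.+1.
Proof.
move=> hc hit; rewrite /diag_potential; case: leqP => htp.
  have := diag_cost_ltS t c (ltnW hc) (introT andP (conj hit htp)).
  have := A_bound t c; have := A_bound t c.+1; have := B_bound c; have := B_bound c.+1.
  nia.
by have := diag_cost_leS t c htp; nia.
Qed.

Lemma diag_potential_sub t c : (c < q)%N -> (i <= t < 2 * p + 1 - i)%N ->
  diag_potential t c + F%:Z
  = w (Some (xchr p l t)) (Some (CY (t + c))) + diag_potential t.+1 c.
Proof.
move=> hc ht; rewrite /diag_potential /xchr /wchr.
case: (ltngtP t p) => htp /=.
- by rewrite htp addKn leq_addr ltn_add2l hc /= diag_cost_step_lt // natrD; ring.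
- have tp : (p < t <= 2 * p)%N by lia.
  rewrite ltnNge (ltnW htp) tp addKn leq_addr ltn_add2l hc /= diag_cost_step_gt; last by lia.
  by rewrite natrD; ring.
- subst t; rewrite addKn leq_addr ltn_add2l hc mxget_out // diag_cost_step_eq /=; ring.
Qed.

Lemma potential_le_diag t k : potential t k <= diag_potential t (offset q t k).
Proof. by rewrite /potential; case: eqP => [->|//]; apply/target_le_diag_potential/offset_lt. Qed.

Lemma potential_succ_row t k :
  (i <= t)%N -> potential t.+1 k = diag_potential t.+1 (offset q t.+1 k).
Proof. by move=> ht; rewrite /potential gtn_eqF. Qed.

Lemma potential_last k : potential (2 * p + 1 - i) k = 0.
Proof. by rewrite /potential /diag_potential diag_cost_last !ifN ?addr0 //; lia. Qed.

Lemma potential_del t k : (i <= t < 2 * p + 1 - i)%N ->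
  potential t k <= F%:Z + potential t.+1 k.
Proof.
move=> ht; rewrite potential_succ_row; last by case/andP: ht.
apply: le_trans (potential_le_diag t k) _.
apply: diag_potential_del ht; first exact: offset_lt.
by rewrite /offset; lia.
Qed.

Lemma potential_ins t k : (i <= t)%N -> potential t k <= potential t k.+1.
Proof.
rewrite /potential; case: eqVneq => // ne ht.
have hit : (i < t)%N by rewrite ltn_neqAle eq_sym ne.
have [->//|ne'] := eqVneq (offset q t k.+1) (offset q t k).
have offS : offset q t k.+1 = (offset q t k).+1 by move: ne'; rewrite /offset; lia.
by rewrite offS diag_potential_offsetS // -offS offset_lt.
Qed.

Lemma potential_sub t k : (i <= t < 2 * p + 1 - i)%N ->
  potential t k + F%:Z <= w (Some (xchr p l t)) (Some (CY k)) + potential t.+1 k.+1.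
Proof.
move=> ht; rewrite potential_succ_row; last by case/andP: ht.
have -> : offset q t.+1 k.+1 = offset q t k by rewrite /offset subSS.
apply: le_trans (lerD (potential_le_diag t k) (lexx _)) _.
have hc : (offset q t k < q)%N by apply: offset_lt.
have [band|off_band] := boolP (t <= k < t + q)%N.
  have -> : k = (t + (k - t))%N by lia.
  by rewrite offset_band ?diag_potential_sub //; lia.
rewrite wchr_off_band //.
have hcc : (offset q t k <= offset q t k <= (offset q t k).+1)%N by rewrite leqnn leqnSn.
by have := diag_potential_del t _ _ hc hcc ht; lia.
Qed.

Lemma potential_band j t : (j < q)%N -> target = diag_potential i j ->
  potential t (t + j) = diag_potential t j.
Proof. by rewrite /potential => hj hjt; case: eqP => [->|_]; rewrite ?offset_band. Qed.

Local Notation X := (frag (Xs p l) i (size (Xs p l) - i)).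
Local Notation Y := (Ys p q).

Lemma size_X : size X = (2 * p + 1 - 2 * i)%N.
Proof. by rewrite size_frag size_Xs ?leq_subr //; lia. Qed.

Lemma nth_X a : (a < size X)%N -> nth (CX 0) X a = xchr p l (i + a).
Proof.
rewrite size_X => ha; rewrite nth_frag ?nth_Xs ?size_Xs //; lia.
Qed.

Lemma potential_after_X k : potential (i + size X) k = 0.
Proof. by rewrite size_X (_ : i + _ = 2 * p + 1 - i)%N ?potential_last //; lia. Qed.

Lemma nth_Y k : (k < size Y)%N -> nth (CX 0) Y k = CY k.
Proof. by rewrite size_Ys; apply: nth_Ys. Qed.

Definition grid_potential (a b : nat) : int :=
  (size Y - b)%:R * F%:Z + potential (i + a) b.

Lemma grid_potential_ins a b : (b < size Y)%N ->
  grid_potential a b = F%:Z + (size Y - b.+1)%:R * F%:Z + potential (i + a) b.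
Proof. by move=> hb; rewrite /grid_potential; nia. Qed.

Lemma grid_potential_end : grid_potential (size X) (size Y) = 0.
Proof. by rewrite /grid_potential subnn potential_after_X. Qed.

Lemma acost_ge_target s c : acost w X Y s = Some c -> (size Y)%:R * F%:Z + target <= c.
Proof.
rewrite -[X]drop0 -[Y in acost _ _ Y]drop0 => hs.
have -> : (size Y)%:R * F%:Z + target = grid_potential 0 0.
  by rewrite /grid_potential /potential addn0 eqxx subn0.
apply: (acost_ge_potential (CX 0) grid_potential _ _ _ _ s 0 0 c (leq0n _) (leq0n _) hs).
- move=> a b ha hb; rewrite /grid_potential wchr_del addnS.
  by have := potential_del (i + a) b; rewrite size_X in ha; lia.
- move=> a b ha hb; rewrite grid_potential_ins // /grid_potential wchr_ins.
  by have := potential_ins (i + a) b (leq_addr _ _); lia.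
- move=> a b ha hb; rewrite grid_potential_ins // /grid_potential nth_X // nth_Y // addnS.
  by have := potential_sub (i + a) b; rewrite size_X in ha; lia.
- by rewrite grid_potential_end.
Qed.

Lemma tight_alignment :
  exists2 s, acost w X Y s = Some ((size Y)%:R * F%:Z + target) & ~~ has isDel s.
Proof.
have [j hj hjt] := target_attained.
have sizeXY : (i + j + size X <= size Y)%N by rewrite size_X size_Ys; lia.
exists (nseq (i + j) Ins ++ nseq (size X) Defs.Sub ++ nseq (size Y - (i + j) - size X) Ins);
  last by rewrite !has_cat !has_nseq /= !andbF.
have -> : (size Y)%:R * F%:Z + target = grid_potential 0 0.
  by rewrite /grid_potential /potential addn0 eqxx subn0.
rewrite -[X in acost _ X]drop0 -[Y in acost _ _ Y]drop0 -[Z in _ ++ _ ++ Z]cats0.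
apply: (acost_nseq_Ins (CX 0) grid_potential 0 0 (i + j)).
- lia.
- move=> k hk; rewrite grid_potential_ins; last lia.
  by rewrite wchr_ins /grid_potential /potential addn0 eqxx; ring.
apply: (acost_nseq_Sub (CX 0) grid_potential 0 (i + j) (size X)).
- lia.
- lia.
- move=> u hu; rewrite !add0n grid_potential_ins; last lia.
  rewrite /grid_potential nth_X // nth_Y; last lia.
  rewrite addnS (_ : i + j + u = i + u + j)%N; last lia.
  rewrite -addSn !potential_band //.
  by have := diag_potential_sub (i + u) j hj; rewrite size_X in hu; lia.
rewrite !add0n; apply: (acost_nseq_Ins (CX 0) grid_potential _ _ _).
- lia.
- move=> k hk; rewrite grid_potential_ins; last lia.
  by rewrite wchr_ins /grid_potential !potential_after_X; ring.
have -> : (i + j + size X + (size Y - (i + j) - size X) = size Y)%N by lia.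
by rewrite !drop_size grid_potential_end.
Qed.

Lemma edw_frag_Xs_Ys :
  is_edw w X Y ((size Y)%:R * F%:Z + ((p - i) * (q + 1))%:R * D%:Z + minAB A B i l)
  /\ exists s, optimal_alignment w X Y s /\ ~~ has isDel s.
Proof.
rewrite -addrA -/target.
have [s hs noDel] := tight_alignment.
have [edw opt] := edw_of_lower_bound _ _ hs acost_ge_target.
by split; last exists s.
Qed.

End Potential.

Theorem lemma6p1 (p q r E D F : nat)
  (A : 'M[int]_(p, q)) (B : 'M[int]_(q, r)) :
  (1 <= p)%N -> (1 <= q)%N -> (1 <= r)%N -> (1 <= E)%N ->
  (1 <= D)%N -> (1 <= F)%N ->
  (forall i j, - (E%:Z) <= A i j <= E%:Z) ->
  (forall i j, - (E%:Z) <= B i j <= E%:Z) ->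
  (E * (size (Xs p 0) + size (Ys p q)) < D)%N ->
  (D * (size (Xs p 0) + size (Ys p q)) < F)%N ->
  forall l i, (l < r)%N -> (i < p)%N ->
    let X := frag (Xs p l) i (size (Xs p l) - i) in
    let w := wchr A B D%:Z F%:Z in
    is_edw w X (Ys p q)
      ((size (Ys p q))%:R * F%:Z + ((p - i) * (q + 1))%:R * D%:Z
         + minAB A B i l)
    /\ exists s, optimal_alignment w X (Ys p q) s /\ ~~ has isDel s.
Proof.
(* p >= 1 follows from i < p. *)
move=> _ q_gt0 _ _ _ _ A_bound B_bound E_ll_D D_ll_F l i _ i_lt_p X w.
rewrite size_Xs size_Ys in E_ll_D D_ll_F.
have hA : forall t c, - E%:Z <= mxget A t c <= E%:Z by move=> t c; apply: mxget_bound.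
have hB : forall c, - E%:Z <= mxget B c l <= E%:Z by move=> c; apply: mxget_bound.
have hED : 4 * E%:Z < D%:Z.
  have : (E * 4 <= E * (2 * p + 1 + (2 * p + q)))%N by rewrite leq_mul2l; lia.
  lia.
have hDF : (q + 2 * p + 1)%:R * D%:Z + 4 * E%:Z < F%:Z.
  have : (D <= p * D)%N by rewrite leq_pmull //; lia.
  nia.
exact: edw_frag_Xs_Ys q_gt0 i_lt_p hA hB hED hDF.
Qed.
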